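(* Let $p=n^{\delta-1}$ with $0<\delta<1$, let $H$ be a graph on $m$ vertices with $m$ dividing $n$, and let $k'\le m$, $k'\le k\le n-m$ with $k-k'\ge 6n^{1-\delta}\log n$. Let $\tilde G_H\sim G_H(n,p,k)$, with planted vertex set $M$ and planted independent set $I'$ of size $k-k'$ among the vertices having no neighbor in $M$. For every integer $t$ with $1\le t\le\frac{k-k'}{2}$, with probability at least $1-2/n$, every set $Q\subset V\setminus(M\cup I')$ of vertices of $\tilde G_H[V\setminus M]$ with $|Q|=t<k-k'$ has at least $t+1$ neighbors in $I'$.
   Context: $G(n,p)$ is the Erdős–Rényi random graph on $V=[n]$. With $H$ on vertex set $[m]$, partition $[n]$ into parts $P_i=\{(i-1)\frac nm+1,\dots,i\frac nm\}$. Distribution $G_H(n,p,k)$: sample $G'\sim G(n,p)$; choose a uniformly random $M=\{v_1,\dots,v_m\}$ with $v_i\in P_i$ and replace $G'[M]$ by a copy of $H$ with vertex $i$ at $v_i$, giving $G_H$; among the vertices of $G_H$ with no neighbor in $M$, choose a uniformly random set $I'$ of size $k-k'$ and delete all edges inside $I'$, giving $\tilde G_H$ (if fewer than $k-k'$ such vertices exist, instead delete all edges inside a uniformly random set of $k$ vertices of $G_H$). *)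

From HB Require Import structures.
From mathcomp Require Import all_boot all_order all_algebra.
From mathcomp Require Import all_classical all_reals all_analysis.
Set Implicit Arguments. Unset Strict Implicit. Unset Printing Implicit Defensive.
Import Order.TTheory GRing.Theory Num.Theory.
Local Open Scope ring_scope.

(* Graphs on vertex type 'I_n are edge sets: sets of 2-element subsets. *)
Definition pairs (n : nat) : {set {set 'I_n}} := [set e : {set 'I_n} | #|e| == 2%N].

Section RandomGraph.
Variables (R : realType) (n m : nat) (p : R) (H : {set {set 'I_m}}) (k k' : nat).

Definition wG (E : {set {set 'I_n}}) : R :=
  if E \subset pairs n then p ^+ #|E| * (1 - p) ^+ (#|pairs n| - #|E|) else 0.

(* Vertex v (0-indexed) lies in part P_i iff v %/ (n/m) = i *)
Definition valid_choice (f : {ffun 'I_m -> 'I_n}) : bool :=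
  [forall i, (f i %/ (n %/ m))%N == i].

Definition wM (f : {ffun 'I_m -> 'I_n}) : R :=
  if valid_choice f then (#|[set g | valid_choice g]|%:R)^-1 else 0.

Definition planted (f : {ffun 'I_m -> 'I_n}) : {set 'I_n} := [set f i | i in 'I_m].

(* G_H: replace G'[M] by the copy of H with vertex i at f i *)
Definition EH (E : {set {set 'I_n}}) (f : {ffun 'I_m -> 'I_n}) : {set {set 'I_n}} :=
  [set e in E | ~~ (e \subset planted f)] :|: imset (fun e : {set 'I_m} => imset f (mem e)) (mem H).

Definition nonadjM (E : {set {set 'I_n}}) (f : {ffun 'I_m -> 'I_n}) : {set 'I_n} :=
  [set v | [forall u in planted f, [set u; v] \notin EH E f]].

(* distribution of the set I' whose inner edges are deleted *)
Definition wI (E : {set {set 'I_n}}) (f : {ffun 'I_m -> 'I_n}) (I : {set 'I_n}) : R :=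
  let N := nonadjM E f in
  if (k - k' <= #|N|)%N then
    (if (I \subset N) && (#|I| == k - k')%N then ('C(#|N|, k - k')%:R)^-1 else 0)
  else (if #|I| == k then ('C(n, k)%:R)^-1 else 0).

Definition Etilde (E : {set {set 'I_n}}) (f : {ffun 'I_m -> 'I_n}) (I : {set 'I_n})
  : {set {set 'I_n}} := [set e in EH E f | ~~ (e \subset I)].

Definition probGH
  (ev : {set {set 'I_n}} -> {ffun 'I_m -> 'I_n} -> {set 'I_n} -> bool) : R :=
  \sum_(E : {set {set 'I_n}}) \sum_(f : {ffun 'I_m -> 'I_n}) \sum_(I : {set 'I_n})
     wG E * wM f * wI E f I * (ev E f I)%:R.

End RandomGraph.

Definition expansion_event (n m : nat) (H : {set {set 'I_m}}) (k k' t : nat)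
  (E : {set {set 'I_n}}) (f : {ffun 'I_m -> 'I_n}) (I : {set 'I_n}) : bool :=
  [forall Q : {set 'I_n},
     ((Q \subset ~: (planted f :|: I)) && (#|Q| == t) && (t < k - k')%N) ==>
     (t.+1 <= #|[set y in I | [exists x in Q, [set x; y] \in Etilde H E f I]]|)%N].

(* Fix the planted vertices M.  If expansion fails, some t-set Q outside
   M ∪ I' has at most t neighbours in I', so for some t-subset S of I' the
   graph G' has no edge between Q and I' \ S (edges at a vertex outside
   M ∪ I' survive in tilde G_H).  The law of I' depends on G' only through the
   set N of vertices with no neighbour in M; replacing N by N \ Q can only
   increase the weight of any I' avoiding Q, and N \ Q ignores the edges at Q.
   Hence the t (|I'| - t) edges between Q and I' \ S are absent independently
   of I', with probability (1 - p)^(t (|I'| - t)) <= n^(-3t), and a union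
   bound over the at most n^(2t) pairs (Q, S) leaves failure probability at
   most 1/n. *)

From HB Require Import structures.
From mathcomp Require Import all_boot all_order all_algebra.
From mathcomp Require Import all_classical all_reals all_analysis.
From mathcomp Require Import ring lra zify.
Import Order.TTheory GRing.Theory Num.Theory.
Set Implicit Arguments. Unset Strict Implicit. Unset Printing Implicit Defensive.
Local Open Scope ring_scope.

Lemma sum_set_setU1 (T : finType) (V : nmodType) (F : {set T} -> V) (x : T) :
  \sum_(A : {set T}) F A = \sum_(A : {set T} | x \notin A) (F A + F (x |: A)).
Proof.
rewrite big_split /= (bigID (fun A : {set T} => x \notin A)) /=; congr (_ + _).
rewrite (reindex_onto (fun A => x |: A) (fun A => A :\ x)) /=; last first.
  by move=> A /negPn; apply: finset.setD1K.
apply: eq_bigl => A; rewrite setU11 /=.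
apply/eqP/idP => [<-|]; first by rewrite !inE eqxx.
exact: finset.setU1K.
Qed.

Lemma sumr_ge_term (R : numDomainType) (T : finType) (F : T -> R) (i : T) :
  (forall j, 0 <= F j) -> F i <= \sum_j F j.
Proof.
by move=> F_ge0; rewrite (bigD1 i) //= lerDl sumr_ge0.
Qed.

Lemma sumr_indicator (R : pzSemiRingType) (T : finType) (P : pred T) (c : R) :
  \sum_i (P i)%:R * c = #|P|%:R * c.
Proof.
rewrite (eq_bigr (fun i => if P i then c else 0)) => [|i _]; last first.
  by case: (P i); rewrite ?mul1r ?mul0r.
by rewrite -big_mkcond sumr_const mulr_natl.
Qed.

Lemma exists_subset_card (T : finType) (B : {set T}) (j : nat) :
  (j <= #|B|)%N -> exists2 S : {set T}, S \subset B & #|S| = j.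
Proof.
rewrite -bin_gt0 -cards_draws => /card_gt0P [S]; rewrite inE => /andP [SB /eqP cardS].
by exists S.
Qed.

Lemma exists_between_card (T : finType) (A B : {set T}) (j : nat) :
  A \subset B -> (#|A| <= j <= #|B|)%N ->
  exists S : {set T}, [/\ A \subset S, S \subset B & #|S| = j].
Proof.
move=> AB /andP [Aj jB].
have [S' S'BA cardS'] : exists2 S' : {set T}, S' \subset B :\: A & #|S'| = (j - #|A|)%N.
  by apply: exists_subset_card; rewrite cardsD (finset.setIidPr AB) leq_sub2r.
have AS' : [disjoint A & S'].
  rewrite disjoint_sym finset.disjoints_subset (fintype.subset_trans S'BA) //.
  by rewrite finset.setDE finset.subsetIr.
exists (A :|: S'); split; first exact: finset.subsetUl.
  by rewrite finset.subUset AB (fintype.subset_trans S'BA) ?finset.subsetDl.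
by rewrite cardsU (disjoint_setI0 AS') cards0 subn0 cardS' subnKC.
Qed.

Lemma binomial_le_expn (a b : nat) : ('C(a, b) <= a ^ b)%N.
Proof.
apply: (@leq_trans ('C(a, b) * b`!)); first by rewrite leq_pmulr ?fact_gt0.
rewrite bin_ffact; elim: b => [|b IHb]; first by rewrite ffactn0 expn0.
by rewrite ffactnSr expnS mulnC leq_mul // leq_subr.
Qed.

Lemma one_subX_le_expR (R : realType) (p : R) (K : nat) :
  p <= 1 -> (1 - p) ^+ K <= expR (- (p * K%:R)).
Proof.
move=> p_le1; rewrite -mulNr expRM_natr.
by apply: lerXn2r; rewrite ?nnegrE ?subr_ge0 ?expR_ge0 // expR_ge1Dx.
Qed.

Lemma powR_lt1 (R : realType) (a x : R) : 1 < a -> x < 0 -> a `^ x < 1.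
Proof.
move=> a_gt1 x_lt0; rewrite /powR gt_eqF ?(lt_trans ltr01) //.
by rewrite expR_lt1 pmulr_llt0 // ln_gt0.
Qed.

Section ErdosRenyiWeights.
Variables (R : realType) (n : nat) (p : R).
Hypotheses (p_ge0 : 0 <= p) (p_le1 : p <= 1).
Local Notation graph := {set {set 'I_n}}.

Lemma wG_ge0 (E : graph) : 0 <= wG p E.
Proof.
rewrite /wG; case: ifP => // _.
by rewrite mulr_ge0 ?exprn_ge0 ?subr_ge0.
Qed.

Lemma wG_setU1 (E : graph) (e : {set 'I_n}) : e \in pairs n -> e \notin E ->
  (1 - p) * wG p (e |: E) = p * wG p E.
Proof.
move=> e_pair eNE; rewrite /wG finset.subUset finset.sub1set e_pair /=.
case: ifP => E_pairs; last by rewrite !mulr0.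
have ltE : (#|E| < #|pairs n|)%N.
  by apply: proper_card; rewrite finset.properEneq E_pairs andbT; apply: contraNneq eNE => ->.
rewrite cardsU1 eNE add1n -(subnSK ltE) !exprS.
by set a := p ^+ _; set b := (1 - p) ^+ _; ring.
Qed.

Lemma sum_wG_notin (psi : graph -> R) (e : {set 'I_n}) : e \in pairs n ->
  (forall E : graph, e \notin E -> psi (e |: E) = psi E) ->
  \sum_(E : graph) wG p E * psi E * (e \notin E)%:R = (1 - p) * \sum_(E : graph) wG p E * psi E.
Proof.
move=> e_pair psiE.
rewrite (sum_set_setU1 _ e) (sum_set_setU1 (fun E => wG p E * psi E) e) mulr_sumr.
apply: eq_bigr => E eNE; rewrite setU11 eNE psiE // mulr1 mulr0 addr0.
by rewrite mulrDr mulrA (mulrA (1 - p)) wG_setU1 //; ring.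
Qed.

Lemma sum_wG_disjoint (C : graph) (phi : graph -> R) : C \subset pairs n ->
  (forall E : graph, phi E = phi (E :\: C)) ->
  \sum_(E : graph) wG p E * phi E * [disjoint C & E]%:R =
    (1 - p) ^+ #|C| * \sum_(E : graph) wG p E * phi E.
Proof.
move cardC: #|C| => c; elim: c C phi cardC => [|c IHc] C phi cardC C_pairs phiC.
  rewrite (cards0_eq cardC) mul1r.
  by apply: eq_bigr => E _; rewrite -setI_eq0 finset.set0I eqxx mulr1.
have /card_gt0P [e eC] : (0 < #|C|)%N by rewrite cardC.
set C' := C :\ e.
have cardC' : #|C'| = c by move: cardC; rewrite (cardsD1 e C) eC => -[].
have disjointC (E : graph) : [disjoint C & E] = (e \notin E) && [disjoint C' & E].
  by rewrite -(finset.setD1K eC) !finset.disjoints_subset finset.subUset finset.sub1set inE.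
have phiC' (E : graph) : phi E = phi (E :\: C').
  by rewrite phiC [RHS]phiC finset.setDDl (finset.setUidPr (finset.subsetDl _ _)).
transitivity (\sum_(E : graph) wG p E * (phi E * [disjoint C' & E]%:R) * (e \notin E)%:R).
  by apply: eq_bigr => E _; rewrite disjointC -mulnb natrM; ring.
rewrite sum_wG_notin ?(fintype.subsetP C_pairs) // => [|E eNE]; last first.
  have -> : [disjoint C' & e |: E] = [disjoint C' & E].
    rewrite !finset.disjoints_subset finset.setCU finset.subsetI.
    by rewrite -finset.disjoints_subset disjoint_sym finset.disjoints1 finset.setD11.
  have eCE : [set e] :\: C = finset.set0 by apply/eqP; rewrite finset.setD_eq0 finset.sub1set.
  by rewrite phiC [phi E]phiC finset.setDUl eCE finset.set0U.
under eq_bigr do rewrite mulrA.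
by rewrite IHc ?(fintype.subset_trans (finset.subsetDl C [set e])) // exprS mulrA.
Qed.

Lemma sum_wG : p < 1 -> \sum_(E : graph) wG p E = 1.
Proof.
move=> p_lt1.
have := @sum_wG_disjoint (pairs n) (fun _ => 1) (fintype.subxx _) (fun _ => erefl).
rewrite (bigD1 finset.set0) //= big1 => [|E /negbTE E_neq0]; last first.
  rewrite /wG; case: ifP => [E_pairs|_]; last by rewrite !mul0r.
  by rewrite -setI_eq0 (finset.setIidPr E_pairs) E_neq0 mulr0.
rewrite -setI_eq0 finset.setI0 eqxx addr0 !mulr1.
under [in RHS]eq_bigr do rewrite mulr1.
rewrite /wG finset.sub0set cards0 expr0 subn0 mul1r => wG_set0.
have q_neq0 : (1 - p) ^+ #|pairs n| != 0 by rewrite expf_neq0 // subr_eq0 eq_sym lt_eqF.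
by apply: (mulfI q_neq0); rewrite mulr1 -wG_set0.
Qed.

End ErdosRenyiWeights.

Section UniformSubsetWeights.
Variables (R : realType) (n k k' : nat).

Definition wIfrom (N I : {set 'I_n}) : R :=
  if (k - k' <= #|N|)%N then
    (if (I \subset N) && (#|I| == k - k')%N then ('C(#|N|, k - k')%:R)^-1 else 0)
  else (if #|I| == k then ('C(n, k)%:R)^-1 else 0).

Lemma wIE (m : nat) (H : {set {set 'I_m}}) E f I :
  wI R H k k' E f I = wIfrom (nonadjM H E f) I.
Proof. by []. Qed.

Lemma wIfrom_ge0 (N I : {set 'I_n}) : 0 <= wIfrom N I.
Proof. by rewrite /wIfrom; case: ifP => _; case: ifP => _; rewrite ?invr_ge0 ?ler0n. Qed.

Lemma sum_wIfrom (N : {set 'I_n}) : (k <= n)%N -> \sum_(I : {set 'I_n}) wIfrom N I = 1.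
Proof.
move=> k_le_n; rewrite /wIfrom.
case N_big: (k - k' <= #|N|)%N; rewrite -big_mkcond /= sumr_const.
  have -> : #|[pred I : {set 'I_n} | (I \subset N) && (#|I| == k - k')%N]| = 'C(#|N|, k - k').
    by rewrite -cards_draws; apply: eq_card => I; rewrite inE.
  by rewrite -[X in X = 1]mulr_natr mulVf // pnatr_eq0 -lt0n bin_gt0.
have -> : #|[pred I : {set 'I_n} | #|I| == k]| = 'C(n, k).
  by rewrite -[n in RHS]card_ord -card_draws; apply: eq_card => I; rewrite !inE.
by rewrite -[X in X = 1]mulr_natr mulVf // pnatr_eq0 -lt0n bin_gt0.
Qed.

Lemma wIfrom_neq0_card (N I : {set 'I_n}) : wIfrom N I != 0 -> (k - k' <= #|I|)%N.
Proof.
rewrite /wIfrom; case: ifP => _; case: ifP => [|_]; rewrite ?eqxx //.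
  by case/andP => _ /eqP ->.
by move/eqP ->; rewrite leq_subr.
Qed.

(* If [I] fits in [N] it also fits in [N :\: Q], so the right-hand side never
   falls back to the uniform [k]-subset of the whole vertex set. *)
Lemma wIfrom_setD (N Q I : {set 'I_n}) : I \subset ~: Q -> wIfrom N I <= wIfrom (N :\: Q) I.
Proof.
move=> IQ; rewrite /wIfrom.
have NQ_le_N : (#|N :\: Q| <= #|N|)%N by rewrite subset_leq_card ?finset.subsetDl.
have I_NQ : (I \subset N :\: Q) = (I \subset N).
  by rewrite finset.setDE finset.subsetI IQ andbT.
case: (leqP (k - k') #|N :\: Q|) => [NQ_big|NQ_small].
  rewrite (leq_trans NQ_big NQ_le_N) I_NQ; case: ifP => // _.
  by rewrite lef_pV2 ?posrE ?ltr0n ?bin_gt0 ?ler_nat ?leq_bin2l // (leq_trans NQ_big).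
case: ifP => // _; case: ifP => [/andP [IN /eqP cardI]|_]; last by case: ifP.
have := subset_leq_card (etrans I_NQ IN : I \subset N :\: Q).
by rewrite cardI leqNgt NQ_small.
Qed.

End UniformSubsetWeights.

Section CrossEdges.
Variable n : nat.
Implicit Types Q T : {set 'I_n}.

Definition cross_edges Q T : {set {set 'I_n}} := [set [set x; y] | x in Q, y in T].

Lemma cross_edges_pairs Q T : [disjoint Q & T] -> cross_edges Q T \subset pairs n.
Proof.
move=> QT; apply/fintype.subsetP => _ /imset2P [x y xQ yT ->].
rewrite inE cards2; case: (eqVneq x y) => [xy|//].
by move: yT; rewrite -xy (disjointFr QT xQ).
Qed.

Lemma card_cross_edges Q T : [disjoint Q & T] -> #|cross_edges Q T| = (#|Q| * #|T|)%N.
Proof.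
move=> QT; rewrite /cross_edges curry_imset2X card_in_imset ?cardsX //.
move=> [x y] [x' y'] /setXP [xQ yT] /setXP [x'Q y'T] /= eq_xy.
have : x \in [set x'; y'] by rewrite -eq_xy !inE eqxx.
have : y \in [set x'; y'] by rewrite -eq_xy !inE eqxx orbT.
rewrite !inE => /orP [/eqP yx' | /eqP ->]; first by move: x'Q; rewrite -yx' (disjointFl QT yT).
by case/orP => [/eqP -> // | /eqP xy']; move: xQ; rewrite xy' (disjointFl QT y'T).
Qed.

End CrossEdges.

Section PlantedGraph.
Variables (n m : nat) (H : {set {set 'I_m}}).
Implicit Types (E : {set {set 'I_n}}) (f : {ffun 'I_m -> 'I_n}) (Q S T I : {set 'I_n}).

Lemma nonadjM_setD_cross E f Q T : [disjoint Q & planted f] ->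
  nonadjM H E f :\: Q = nonadjM H (E :\: cross_edges Q T) f :\: Q.
Proof.
move=> QM; apply/setP => v; rewrite !inE; case vQ: (v \in Q) => //=.
apply: eq_forallb => u; case uM: (u \in planted f) => //=.
rewrite /EH !inE; case: (boolP ([set u; v] \in cross_edges Q T)) => //= uv_cross.
case: ([set u; v] \in E) => //=; exfalso.
case/imset2P: uv_cross => x y xQ _ /setP /(_ x); rewrite !inE eqxx /=.
case/orP => /eqP xuv; first by move: uM; rewrite -xuv (disjointFr QM xQ).
by move: vQ; rewrite -xuv xQ.
Qed.

Lemma Etilde_edge E f I (x y : 'I_n) : x \notin planted f -> x \notin I ->
  [set x; y] \in E -> [set x; y] \in Etilde H E f I.
Proof.
move=> xM xI xyE; rewrite /Etilde /EH !inE xyE /=.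
by rewrite !finset.subUset !finset.sub1set (negbTE xM) (negbTE xI).
Qed.

Variables (k k' t : nat).

Definition expansion_witness f Q S I : bool :=
  [&& #|Q| == t, Q \subset ~: (planted f :|: I), S \subset I & #|S| == t].

Lemma expansion_witness_disjoint f Q S I :
  expansion_witness f Q S I -> [disjoint Q & planted f :|: I].
Proof. by case/and4P => _ QMI _ _; rewrite finset.disjoints_subset. Qed.

Lemma expansion_failure_witness E f I : (t <= #|I|)%N ->
  ~~ expansion_event H k k' t E f I ->
  exists Q, exists S, expansion_witness f Q S I && [disjoint cross_edges Q (I :\: S) & E].
Proof.
move=> tI /forallPn [Q]; rewrite negb_imply => /andP [/andP [/andP [QMI /eqP cardQ] _]].
set NB := [set y in I | _]; rewrite -ltnNge ltnS => NBt.
have NBI : NB \subset I by apply/fintype.subsetP => y; rewrite inE => /andP [].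
have [S [NBS SI cardS]] := exists_between_card NBI (introT andP (conj NBt tI)).
exists Q, S; rewrite /expansion_witness cardQ QMI SI cardS !eqxx /=.
rewrite finset.disjoints_subset; apply/fintype.subsetP => _ /imset2P [x y xQ yIS ->].
have := fintype.subsetP QMI x xQ; rewrite !inE negb_or => /andP [xM xI].
move: yIS; rewrite inE => /andP [yS yI]; apply: contra yS => xyE.
apply: (fintype.subsetP NBS); rewrite inE yI; apply/existsP; exists x.
by rewrite xQ Etilde_edge.
Qed.

End PlantedGraph.

Section ExpansionFailure.
Variables (R : realType) (n m : nat) (H : {set {set 'I_m}}) (k k' t : nat).
Variables (p : R) (f : {ffun 'I_m -> 'I_n}).
Hypotheses (p_ge0 : 0 <= p) (p_le1 : p <= 1) (k_le_n : (k <= n)%N) (t_le : (t.*2 <= k - k')%N).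
Local Notation graph := {set {set 'I_n}}.
Local Notation wIQ E Q I := (wIfrom R k k' (nonadjM H E f :\: Q) I).
Local Notation witness := (expansion_witness t f).

Lemma wI_failure_le (E : graph) (I : {set 'I_n}) :
  wI R H k k' E f I * (~~ expansion_event H k k' t E f I)%:R <=
  \sum_(Q : {set 'I_n}) \sum_(S : {set 'I_n})
    wIQ E Q I * (witness Q S I)%:R * [disjoint cross_edges Q (I :\: S) & E]%:R.
Proof.
have terms_ge0 Q S :
    0 <= wIQ E Q I * (witness Q S I)%:R * [disjoint cross_edges Q (I :\: S) & E]%:R.
  by rewrite !mulr_ge0 ?wIfrom_ge0.
have sum_ge0 : 0 <= \sum_Q \sum_S wIQ E Q I * (witness Q S I)%:R *
    [disjoint cross_edges Q (I :\: S) & E]%:R.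
  by do 2!apply: sumr_ge0 => ? _.
case: (boolP (expansion_event H k k' t E f I)) => [_|fail]; first by rewrite mulr0.
rewrite mulr1 wIE; have [->//|w_neq0] := eqVneq (wIfrom R k k' (nonadjM H E f) I) 0.
have tI : (t <= #|I|)%N.
  by apply: leq_trans (wIfrom_neq0_card w_neq0); apply: leq_trans t_le; rewrite -addnn leq_addr.
have [Q [S /andP [wit disj]]] := expansion_failure_witness tI fail.
apply: le_trans (sumr_ge_term Q (fun Q => sumr_ge0 _ (fun S _ => terms_ge0 Q S))).
apply: le_trans (sumr_ge_term S (terms_ge0 Q)).
rewrite wit disj !mulr1 wIfrom_setD //.
rewrite -finset.disjoints_subset disjoint_sym.
exact: disjointWr (finset.subsetUr _ _) (expansion_witness_disjoint wit).
Qed.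

Lemma sum_wG_witness (Q S I : {set 'I_n}) : witness Q S I ->
  \sum_(E : graph) wG p E * wIQ E Q I * [disjoint cross_edges Q (I :\: S) & E]%:R =
    (1 - p) ^+ (t * (#|I| - t)) * \sum_(E : graph) wG p E * wIQ E Q I.
Proof.
move=> wit; have QMI := expansion_witness_disjoint wit.
have QM : [disjoint Q & planted f] := disjointWr (finset.subsetUl _ _) QMI.
have QIS : [disjoint Q & I :\: S].
  exact: disjointWr (fintype.subset_trans (finset.subsetDl I S) (finset.subsetUr _ I)) QMI.
case/and4P: wit => /eqP cardQ _ SI /eqP cardS.
rewrite sum_wG_disjoint ?cross_edges_pairs // => [|E]; last by rewrite -nonadjM_setD_cross.
by rewrite card_cross_edges // cardsDS // cardQ cardS.
Qed.

Variable g : R.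
Hypothesis g_bound : forall s, (k - k' <= s <= n)%N ->
  'C(s, t)%:R * (1 - p) ^+ (t * (s - t)) <= g.

Lemma witness_prob_le (Q I : {set 'I_n}) :
  \sum_(S : {set 'I_n}) \sum_(E : graph)
    wG p E * (wIQ E Q I * (witness Q S I)%:R * [disjoint cross_edges Q (I :\: S) & E]%:R)
  <= (#|Q| == t)%:R * g * \sum_(E : graph) wG p E * wIQ E Q I.
Proof.
set W := \sum_(E : graph) _.
have W_ge0 : 0 <= W by apply: sumr_ge0 => E _; rewrite mulr_ge0 ?wG_ge0 ?wIfrom_ge0.
have g_ge0 : 0 <= g.
  have kk'_n : (k - k' <= k - k' <= n)%N by rewrite leqnn (leq_trans (leq_subr _ _)).
  by apply: le_trans (g_bound kk'_n); rewrite mulr_ge0 ?exprn_ge0 ?subr_ge0.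
case goodQ: ((#|Q| == t) && (Q \subset ~: (planted f :|: I))); last first.
  rewrite big1 => [|S _]; first by rewrite !mulr_ge0.
  have -> : witness Q S I = false.
    by apply: contraFF goodQ => /and4P [-> -> _ _].
  by rewrite big1 // => E _; rewrite mulr0 mul0r mulr0.
case/andP: goodQ => /eqP cardQ QMI; rewrite cardQ eqxx mul1r.
pose miss := (1 - p) ^+ (t * (#|I| - t)) * W.
rewrite (eq_bigr (fun S : {set 'I_n} => ((S \subset I) && (#|S| == t))%:R * miss)).
  rewrite sumr_indicator mulrA.
  have -> : #|[pred S : {set 'I_n} | (S \subset I) && (#|S| == t)]| = 'C(#|I|, t).
    by rewrite -cards_draws; apply: eq_card => S; rewrite inE.
  have [I_big|I_small] := leqP (k - k') #|I|.
    by rewrite ler_wpM2r // g_bound // I_big (leq_trans (max_card _)) ?card_ord.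
  rewrite [W]big1 ?mulr0 // => E _; apply/eqP; rewrite mulf_eq0; apply/orP; right.
  by apply: contraTT I_small => /wIfrom_neq0_card; rewrite -leqNgt.
move=> S _; case goodS: ((S \subset I) && (#|S| == t)); last first.
  have -> : witness Q S I = false by rewrite /expansion_witness goodS !andbF.
  by rewrite mul0r big1 // => E _; rewrite mulr0 mul0r mulr0.
have wit : witness Q S I by rewrite /expansion_witness cardQ eqxx QMI goodS.
rewrite wit mul1r /miss -(sum_wG_witness wit).
by apply: eq_bigr => E _; rewrite mulr1 mulrA.
Qed.

Lemma expansion_failure_prob_le : p < 1 ->
  \sum_(E : graph) wG p E *
    \sum_(I : {set 'I_n}) wI R H k k' E f I * (~~ expansion_event H k k' t E f I)%:R
  <= 'C(n, t)%:R * g.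
Proof.
move=> p_lt1.
pose F E I Q S := wG p E *
  (wIQ E Q I * (witness Q S I)%:R * [disjoint cross_edges Q (I :\: S) & E]%:R).
have union_bound : \sum_(E : graph) wG p E *
    \sum_(I : {set 'I_n}) wI R H k k' E f I * (~~ expansion_event H k k' t E f I)%:R
  <= \sum_E \sum_I \sum_Q \sum_S F E I Q S.
  apply: ler_sum => E _; rewrite mulr_sumr; apply: ler_sum => I _.
  apply: le_trans (ler_wpM2l (wG_ge0 p_ge0 p_le1 E) (wI_failure_le E I)) _.
  by rewrite mulr_sumr; apply: ler_sum => Q _; rewrite mulr_sumr.
have reorder : \sum_E \sum_I \sum_Q \sum_S F E I Q S = \sum_Q \sum_I \sum_S \sum_E F E I Q S.
  rewrite exchange_big; under eq_bigr do rewrite exchange_big.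
  by rewrite exchange_big; under eq_bigr do under eq_bigr do rewrite exchange_big.
have total_weight Q : \sum_(I : {set 'I_n}) \sum_(E : graph) wG p E * wIQ E Q I = 1.
  rewrite exchange_big -(sum_wG n p_lt1); apply: eq_bigr => E _.
  by rewrite -mulr_sumr sum_wIfrom // mulr1.
apply: le_trans union_bound _; rewrite reorder.
apply: le_trans (ler_sum _ (fun Q _ => ler_sum _ (fun I _ => witness_prob_le Q I))) _.
under eq_bigr do rewrite -mulr_sumr total_weight mulr1.
have card_tsets : #|[pred Q : {set 'I_n} | #|Q| == t]| = 'C(n, t).
  by rewrite -[n in RHS]card_ord -card_draws; apply: eq_card => Q; rewrite !inE.
by rewrite sumr_indicator card_tsets.
Qed.

Lemma expansion_prob_fibre_ge : p < 1 ->
  1 - 'C(n, t)%:R * g <=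
  \sum_(E : graph) wG p E *
    \sum_(I : {set 'I_n}) wI R H k k' E f I * (expansion_event H k k' t E f I)%:R.
Proof.
move=> p_lt1.
have complement (E : graph) :
  \sum_(I : {set 'I_n}) wI R H k k' E f I * (expansion_event H k k' t E f I)%:R =
  1 - \sum_(I : {set 'I_n}) wI R H k k' E f I * (~~ expansion_event H k k' t E f I)%:R.
  rewrite -[X in _ = X - _](sum_wIfrom R k' (nonadjM H E f) k_le_n) -sumrB.
  apply: eq_bigr => I _.
  by rewrite wIE; case: (expansion_event H k k' t E f I); rewrite ?mulr1 ?mulr0 ?subr0 ?subrr.
under eq_bigr do rewrite complement mulrBr mulr1.
by rewrite sumrB sum_wG // lerD2l lerN2 expansion_failure_prob_le.
Qed.

End ExpansionFailure.

Lemma missing_edges_union_le (R : realType) (n : nat) (p : R) (K t s : nat) :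
  (1 < n)%N -> 0 <= p -> p <= 1 -> 6 * ln (n%:R : R) <= p * K%:R ->
  (0 < t)%N -> (K <= s)%N -> (t.*2 <= s <= n)%N ->
  'C(n, t)%:R * ('C(s, t)%:R * (1 - p) ^+ (t * (s - t))) <= (n%:R : R)^-1.
Proof.
move=> n_gt1 p_ge0 p_le1 lnn_le t_gt0 Ks /andP [ts sn].
have n_gt0 : 0 < (n%:R : R) by rewrite ltr0n ltnW.
set N := (n%:R : R) ^+ t.
have N_gt0 : 0 < N by rewrite exprn_gt0.
have miss : (1 - p) ^+ (t * (s - t)) <= (N ^+ 3)^-1.
  apply: le_trans (one_subX_le_expR _ p_le1) _.
  rewrite /N -exprM -[X in (X ^+ _)^-1](lnK n_gt0) -expRM_natr -expRN ler_expR lerN2.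
  have Kt : (K * t <= (t * (s - t)).*2)%N by rewrite -muln2; nia.
  move: Kt; rewrite -(ler_nat R) natrM -mul2n natrM => Kt.
  rewrite natrM mulrA.
  have := ler_wpM2r (ler0n R t) lnn_le; have := ler_wpM2l p_ge0 Kt.
  lra.
have C_le (a : nat) : (a <= n)%N -> ('C(a, t)%:R : R) <= N.
  move=> an; rewrite /N -natrX ler_nat (leq_trans (binomial_le_expn a t)) //.
  by rewrite leq_exp2r.
apply: le_trans (ler_pM _ _ (C_le n (leqnn n)) (ler_pM _ _ (C_le s sn) miss)) _;
  rewrite ?mulr_ge0 ?exprn_ge0 ?ler0n ?subr_ge0 //.
have -> : N * (N * (N ^+ 3)^-1) = N^-1 by field; rewrite gt_eqF.
by rewrite lef_pV2 ?posrE // /N ler_eXnr // ler1n ltnW.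
Qed.

Lemma edge_prob_density (R : realType) (n K : nat) (delta : R) :
  (0 < n)%N -> 6 * n%:R `^ (1 - delta) * ln (n%:R : R) <= K%:R ->
  6 * ln (n%:R : R) <= n%:R `^ (delta - 1) * K%:R.
Proof.
move=> n_gt0 dense; have q_gt0 : 0 < (n%:R : R) `^ (1 - delta) by rewrite powR_gt0 ?ltr0n.
rewrite (_ : delta - 1 = - (1 - delta)); last by ring.
by rewrite powRN [_^-1 * _]mulrC ler_pdivlMr // mulrAC.
Qed.

Lemma valid_choice_exists (n m : nat) : (0 < m)%N -> (0 < n)%N -> (m %| n)%N ->
  exists f : {ffun 'I_m -> 'I_n}, valid_choice f.
Proof.
move=> m_gt0 n_gt0 m_dvd_n; have d_gt0 : (0 < n %/ m)%N by rewrite divn_gt0 // dvdn_leq.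
have lt (i : 'I_m) : (i * (n %/ m) < n)%N.
  by rewrite -[n in (_ < n)%N](divnK m_dvd_n) mulnC ltn_pmul2l ?ltn_ord.
by exists [ffun i => Ordinal (lt i)]; apply/forallP => i; rewrite ffunE /= mulnK.
Qed.

Lemma sum_wM (R : realType) (n m : nat) : (0 < m)%N -> (0 < n)%N -> (m %| n)%N ->
  \sum_(f : {ffun 'I_m -> 'I_n}) wM R f = 1.
Proof.
move=> m_gt0 n_gt0 m_dvd_n; rewrite /wM -big_mkcond /= sumr_const.
have -> : #|[pred f : {ffun 'I_m -> 'I_n} | valid_choice f]| =
           #|[set g : {ffun 'I_m -> 'I_n} | valid_choice g]|.
  by apply: eq_card => f; rewrite !inE.
rewrite -[X in X = 1]mulr_natr mulVf // pnatr_eq0 -lt0n.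
have [f f_valid] := valid_choice_exists m_gt0 n_gt0 m_dvd_n.
by apply/card_gt0P; exists f; rewrite inE.
Qed.

Lemma wM_ge0 (R : realType) (n m : nat) (f : {ffun 'I_m -> 'I_n}) : 0 <= wM R f.
Proof. by rewrite /wM; case: ifP => _; rewrite ?invr_ge0 ?ler0n. Qed.

Lemma probGH_fibre (R : realType) (n m : nat) (p : R) (H : {set {set 'I_m}}) (k k' : nat)
    (ev : {set {set 'I_n}} -> {ffun 'I_m -> 'I_n} -> {set 'I_n} -> bool) :
  probGH p H k k' ev = \sum_(f : {ffun 'I_m -> 'I_n}) wM R f *
    \sum_(E : {set {set 'I_n}}) wG p E *
      \sum_(I : {set 'I_n}) wI R H k k' E f I * (ev E f I)%:R.
Proof.
rewrite /probGH exchange_big; apply: eq_bigr => f _.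
rewrite mulr_sumr; apply: eq_bigr => E _; rewrite !mulr_sumr; apply: eq_bigr => I _.
by rewrite [wG p E * _]mulrC -!mulrA.
Qed.

Unset Implicit Arguments. Set Strict Implicit. Set Printing Implicit Defensive.

Theorem lemmaC5 (R : realType) (n m : nat) (delta : R) (H : {set {set 'I_m}})
    (k k' t : nat) :
  (0 < m)%N -> (m %| n)%N -> 0 < delta -> delta < 1 ->
  H \subset pairs m ->
  (k' <= m)%N -> (k' <= k)%N -> (k <= n - m)%N ->
  6 * (n%:R `^ (1 - delta)) * ln (n%:R : R) <= (k - k')%:R ->
  (1 <= t)%N -> (t.*2 <= k - k')%N ->
  1 - 2 / n%:R <=
    @probGH R n m (n%:R `^ (delta - 1)) H k k' (@expansion_event n m H k k' t).
Proof.
move=> m_gt0 m_dvd_n _ delta_lt1 _ _ _ k_le_nm dense t_gt0 t_le.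
have n_gt1 : (1 < n)%N by lia.
have k_le_n : (k <= n)%N by lia.
have n_gt0 : 0 < (n%:R : R) by rewrite ltr0n; lia.
set p := n%:R `^ (delta - 1).
have p_ge0 : 0 <= p by apply: powR_ge0.
have p_lt1 : p < 1 by apply: powR_lt1; rewrite ?ltr1n // subr_lt0.
have C_gt0 : 0 < ('C(n, t)%:R : R) by rewrite ltr0n bin_gt0; lia.
pose g := ('C(n, t)%:R)^-1 * (n%:R : R)^-1.
have g_bound s : (k - k' <= s <= n)%N -> 'C(s, t)%:R * (1 - p) ^+ (t * (s - t)) <= g.
  case/andP => Ks sn; rewrite /g ler_pdivlMl //.
  have lnn_le := edge_prob_density (ltnW n_gt1) dense.
  apply: (missing_edges_union_le n_gt1 p_ge0 (ltW p_lt1) lnn_le) => //.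
  by rewrite sn andbT (leq_trans t_le).
have fibre f := expansion_prob_fibre_ge H f p_ge0 (ltW p_lt1) k_le_n t_le g_bound p_lt1.
rewrite probGH_fibre; apply: le_trans (ler_sum _ (fun f _ => ler_wpM2l (wM_ge0 R f) (fibre f))).
rewrite -mulr_suml sum_wM ?(ltnW n_gt1) // mul1r /g mulrA mulfV ?gt_eqF // mul1r.
by rewrite lerD2l lerN2 ler_peMl ?invr_ge0 ?ler0n ?ler1n.
Qed.
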